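(* For all integers $m\ge 2$, $n\ge 2$, the state complexity of $L(M)^R\cup L(N)$, where $M$ ranges over complete DFAs with $m$ states and $N$ over complete DFAs with $n$ states (over a common alphabet), is exactly $2^m\cdot n-n+1$: for every such $M,N$ some DFA with at most $2^m\cdot n-n+1$ states accepts $L(M)^R\cup L(N)$, and there exist such $M,N$ for which the minimal complete DFA of $L(M)^R\cup L(N)$ has exactly $2^m\cdot n-n+1$ states.
   Context: DFAs are complete deterministic finite automata; $L(M)$ is the accepted language; $L^R=\{w^R: w\in L\}$ is the reversal of $L$. The state complexity of a regular language is the number of states of its minimal complete DFA; the state complexity of an operation is the maximum state complexity of its result over all argument DFAs of the given sizes. *)

From mathcomp Require Import all_boot.
Set Implicit Arguments. Unset Strict Implicit. Unset Printing Implicit Defensive.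

Record dfa (T : finType) (n : nat) := DFA {
  delta : 'I_n -> T -> 'I_n;
  start : 'I_n;
  final : {set 'I_n} }.

Definition run (T : finType) (n : nat) (A : dfa T n) (q : 'I_n) (w : seq T) : 'I_n :=
  foldl (delta A) q w.

Definition accepts (T : finType) (n : nat) (A : dfa T n) (w : seq T) : bool :=
  run A (start A) w \in final A.

Definition language (T : finType) := seq T -> Prop.

Definition L_of (T : finType) (n : nat) (A : dfa T n) : language T :=
  fun w => accepts A w.

Definition lrev (T : finType) (L : language T) : language T :=
  fun w => exists u, L u /\ w = rev u.

Definition lunion (T : finType) (L1 L2 : language T) : language T :=
  fun w => L1 w \/ L2 w.

Definition recognizes (T : finType) (n : nat) (A : dfa T n) (L : language T) : Prop :=
  forall w, accepts A w <-> L w.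

Definition state_complexity_is (T : finType) (L : language T) (k : nat) : Prop :=
  (exists A : dfa T k, recognizes A L) /\
  (forall k' (A : dfa T k'), recognizes A L -> k <= k').

From mathcomp Require Import all_boot.
Set Implicit Arguments. Unset Strict Implicit. Unset Printing Implicit Defensive.

(* Upper bound: a word w determines the set S_w of states of M from which
   M accepts w^R, and S_{wa} is the preimage of S_w under the letter a.
   Running this subset automaton in parallel with N recognizes L(M)^R u L(N),
   and all pairs whose set is the full set can be merged into one accepting
   sink, leaving (2^m - 1) n + 1 states.
   Lower bound: over the alphabet of all pairs of transition maps, every such
   state is reached by a one-letter word, and any two of them are separated
   by a one-letter suffix; by the Myhill-Nerode argument any DFA for the
   language needs that many states. *)

Definition dfa_of (T X : finType) (d : X -> T -> X) (s : X) (F : pred X) :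
    dfa T #|X| :=
  DFA (fun i a => enum_rank (d (enum_val i) a)) (enum_rank s)
      [set i | F (enum_val i)].

Lemma run_dfa_of (T X : finType) (d : X -> T -> X) (s : X) (F : pred X) x w :
  run (dfa_of d s F) (enum_rank x) w = enum_rank (foldl d x w).
Proof. by elim: w x => [//|a w IHw] x; rewrite /run /= enum_rankK; apply: IHw. Qed.

Lemma accepts_dfa_of (T X : finType) (d : X -> T -> X) (s : X) (F : pred X) w :
  accepts (dfa_of d s F) w = F (foldl d s w).
Proof. by rewrite /accepts run_dfa_of inE enum_rankK. Qed.

Lemma lunion_lrevP (T : finType) m n (M : dfa T m) (N : dfa T n) w :
  lunion (lrev (L_of M)) (L_of N) w <-> accepts M (rev w) || accepts N w.
Proof.
split; first by case=> [[u [Mu ->]]|Nw]; rewrite ?revK ?Mu ?Nw ?orbT.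
by case/orP=> acc; [left; exists (rev w); rewrite revK | right].
Qed.

Lemma recognizes_card_le (T X : finType) (L : language T) (u : X -> seq T)
    k (A : dfa T k) :
  recognizes A L ->
  (forall x y, (forall v, L (u x ++ v) <-> L (u y ++ v)) -> x = y) ->
  #|X| <= k.
Proof.
move=> recA sepL.
have run_inj : injective (fun x => run A (start A) (u x)).
  move=> x y /= eq_run; apply: sepL => v.
  have acc_eq : accepts A (u x ++ v) = accepts A (u y ++ v).
    by rewrite /accepts /run !foldl_cat -/(run A _ (u x)) eq_run.
  by split=> /recA acc; apply/recA; [rewrite -acc_eq | rewrite acc_eq].
by have := leq_card _ run_inj; rewrite card_ord.
Qed.

(* [None] is the accepting sink standing for every pair whose set is full. *)
Definition rev_union_state m n :=
  option ({S : {set 'I_m} | S != setT} * 'I_n)%type.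

Lemma card_rev_union_state m n :
  #|{: rev_union_state m n}| = 2 ^ m * n - n + 1.
Proof.
rewrite card_option card_prod card_sig card_ord.
have -> : #|[pred S : {set 'I_m} | S != setT]| = #|{: {set 'I_m}}|.-1.
  by rewrite -(cardC1 [set: 'I_m]); apply: eq_card.
have -> : #|{: {set 'I_m}}| = 2 ^ m.
  rewrite -[in RHS](card_ord m) -[in RHS]cardsT -card_powerset.
  by apply: eq_card => S; rewrite !inE subsetT.
by rewrite -subn1 mulnBl mul1n addn1.
Qed.

Section RevUnionDFA.
Variables (T : finType) (m n : nat) (M : dfa T m) (N : dfa T n).

Definition rev_union_encode (X : {set 'I_m}) (p : 'I_n) : rev_union_state m n :=
  if insub X is Some X' then Some (X', p) else None.

Definition rev_union_step (x : rev_union_state m n) (a : T) :=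
  if x is Some (X, p) then
    rev_union_encode [set q | delta M q a \in val X] (delta N p a)
  else None.

Definition rev_union_final (x : rev_union_state m n) : bool :=
  if x is Some (X, p) then (start M \in val X) || (p \in final N) else true.

Definition rev_union_dfa :=
  dfa_of rev_union_step (rev_union_encode (final M) (start N)) rev_union_final.

Definition rev_accepting_set (w : seq T) : {set 'I_m} :=
  [set q | run M q (rev w) \in final M].

Lemma foldl_rev_union_step w :
  foldl rev_union_step (rev_union_encode (final M) (start N)) w =
  rev_union_encode (rev_accepting_set w) (run N (start N) w).
Proof.
elim/last_ind: w => [|w a IHw].
  by congr rev_union_encode; apply/setP => q; rewrite inE.
rewrite foldl_rcons IHw /run foldl_rcons -/(run N _ w).
have -> : rev_accepting_set (rcons w a) =
          [set q | delta M q a \in rev_accepting_set w].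
  by apply/setP => q; rewrite !inE rev_rcons.
rewrite {1}/rev_union_encode; case: insubP => [X _ <-|] //=.
rewrite negbK => /eqP ->; rewrite /rev_union_encode insubN //.
by apply/negPn/eqP/setP => q; rewrite !inE.
Qed.

Lemma rev_union_dfa_recognizes :
  recognizes rev_union_dfa (lunion (lrev (L_of M)) (L_of N)).
Proof.
move=> w; apply: (iff_trans _ (iff_sym (lunion_lrevP M N w))).
rewrite accepts_dfa_of foldl_rev_union_step.
rewrite /rev_union_encode; case: insubP => [X _ /= ->|].
  by rewrite inE.
rewrite negbK => /eqP fullX.
have : start M \in rev_accepting_set w by rewrite fullX inE.
by rewrite inE /accepts => ->.
Qed.

Lemma rev_union_recognized :
  exists A : dfa T (2 ^ m * n - n + 1),
    recognizes A (lunion (lrev (L_of M)) (L_of N)).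
Proof.
rewrite -card_rev_union_state.
by exists rev_union_dfa; apply: rev_union_dfa_recognizes.
Qed.

End RevUnionDFA.

Section Witness.
Variables m n : nat.

Definition witness_letter :=
  ({ffun 'I_m.+2 -> 'I_m.+2} * {ffun 'I_n.+2 -> 'I_n.+2})%type.

Definition witness_M : dfa witness_letter m.+2 :=
  DFA (fun q (a : witness_letter) => a.1 q) ord0 [set ord0].
Definition witness_N : dfa witness_letter n.+2 :=
  DFA (fun p (a : witness_letter) => a.2 p) ord0 [set ord0].

Definition witness_L := lunion (lrev (L_of witness_M)) (L_of witness_N).

Definition reach_letter (x : rev_union_state m.+2 n.+2) : witness_letter :=
  if x is Some (X, p) then
    ([ffun q => if q \in val X then ord0 else ord_max], [ffun _ => p])
  else ([ffun _ => ord0], [ffun _ => ord0]).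

Definition accepts_after (x : rev_union_state m.+2 n.+2) (b : witness_letter) :=
  if x is Some (X, p) then (b.1 ord0 \in val X) || (b.2 p == ord0) else true.

Lemma ord0_maxE k (c : bool) : ((if c then ord0 else @ord_max k.+1) == ord0) = c.
Proof. by case: c. Qed.

Lemma witness_L_reach_letter x b :
  witness_L [:: reach_letter x; b] <-> accepts_after x b.
Proof.
apply: (iff_trans (lunion_lrevP _ _ _)); rewrite /accepts /run /= !in_set1.
by case: x => [[X p]|] /=; rewrite !ffunE ?ord0_maxE.
Qed.

Definition probe (q : 'I_m.+2) (P : pred 'I_n.+2) : witness_letter :=
  ([ffun _ => q], [ffun z => if P z then ord0 else ord_max]).

Lemma accepts_after_probe X p q P :
  accepts_after (Some (X, p)) (probe q P) = (q \in val X) || P p.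
Proof. by rewrite /= !ffunE ord0_maxE. Qed.

Lemma accepts_after_inj x y :
  (forall b, accepts_after x b = accepts_after y b) -> x = y.
Proof.
have outside (X : {set 'I_m.+2}) : X != setT -> exists q, q \notin X.
  by rewrite -properT => /properP [_ [q _ qS]]; exists q.
case: x => [[X p]|]; case: y => [[X' p']|] // eq_acc.
- have eqS : X = X'.
    apply: val_inj; apply/setP => q; have := eq_acc (probe q pred0).
    by rewrite !accepts_after_probe !orbF.
  subst X'; have [q qS] := outside _ (valP X).
  have := eq_acc (probe q (pred1 p)).
  by rewrite !accepts_after_probe (negbTE qS) /= eqxx => /esym/eqP ->.
- have [q qS] := outside _ (valP X).
  by have := eq_acc (probe q pred0); rewrite accepts_after_probe (negbTE qS).
- have [q qS] := outside _ (valP X').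
  by have := eq_acc (probe q pred0); rewrite accepts_after_probe (negbTE qS).
Qed.

Lemma witness_L_card_le k (A : dfa witness_letter k) :
  recognizes A witness_L -> 2 ^ m.+2 * n.+2 - n.+2 + 1 <= k.
Proof.
move=> recA; rewrite -card_rev_union_state.
apply: (recognizes_card_le (u := fun x => [:: reach_letter x]) recA) => x y sep.
apply: accepts_after_inj => b; apply/idP/idP => /witness_L_reach_letter acc;
  apply/witness_L_reach_letter; by apply/(sep [:: b]).
Qed.

End Witness.

Theorem theorem9 (m n : nat) (hm : 2 <= m) (hn : 2 <= n) :
  (forall (T : finType) (M : dfa T m) (N : dfa T n),
     exists k, k <= 2 ^ m * n - n + 1 /\
       exists A : dfa T k, recognizes A (lunion (lrev (L_of M)) (L_of N))) /\
  (exists (T : finType) (M : dfa T m) (N : dfa T n),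
     state_complexity_is (lunion (lrev (L_of M)) (L_of N)) (2 ^ m * n - n + 1)).
Proof.
split=> [T M N|].
  by exists (2 ^ m * n - n + 1); split; last exact: rev_union_recognized.
case: m hm => [|[|m]] // _; case: n hn => [|[|n]] // _.
exists (witness_letter m n), (witness_M m n), (witness_N m n).
by split; [apply: rev_union_recognized | apply: witness_L_card_le].
Qed.
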